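(* Let $p\ge3$ be prime and $A,\iota,\chi,\gamma_k$ as in the context. Then \[\chi\circ\gamma_{p-1}+\gamma_{p-1}\circ\chi+\sum_{k=2}^{p-2}\gamma_k\circ\gamma_{p-k}=\iota^{p-1}.\]
   Context: Let $p\ge3$ be prime, $l:=2(p-1)$; $\omega(i):=r+1$ if $i=jl+r$ with $0\le r\le p-2$, and $\omega(i):=l-r$ if $p-1\le r\le l-1$. Let $P_1,\dots,P_{p-1}$ and $e_k$ (identity of $P_k$), $e_{1,1},e_{p-1,p-1},e_{k+1,k}:P_k\to P_{k+1},e_{k,k+1}:P_{k+1}\to P_k$ be as follows: with $\Gamma=\prod_{\lambda\vdash p}\mathbb{Z}_{(p)}^{n_\lambda\times n_\lambda}$ ($n_\lambda$ = Specht module rank), hooks $\lambda^k=(p-k+1,1^{k-1})$, $n^k_{\rm b}=\binom{p-2}{k-1}$, $n^k_{\rm c}=\binom{p-2}{k-2}$, $\Lambda=\{\rho\in\Gamma:\rho^{\lambda^k}_{\rm bb}\equiv\rho^{\lambda^{k+1}}_{\rm cc}\bmod p,\ \rho^{\lambda^k}_{\rm bc}\equiv0\bmod p\}$ (blocks ${\rm cc}$ upper-left $n^k_{\rm c}\times n^k_{\rm c}$, ${\rm bc}$ upper-right, ${\rm bb}$ lower-right), $\mathbb{F}_p\mathfrak{S}_p$ identified with $\Lambda/p\Lambda$ via the known isomorphism $\mathbb{Z}_{(p)}\mathfrak{S}_p\cong\Lambda$, matrix units $\eta_{\lambda,i,j}$, $\tilde e_k=\eta_{\lambda^k,n^k_{\rm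 c}+1,n^k_{\rm c}+1}+\eta_{\lambda^{k+1},1,1}$, $P_k=\tilde e_k\Lambda/p\tilde e_k\Lambda$, maps induced by left multiplication with $p\eta_{\lambda^1,1,1}$, $p\eta_{\lambda^p,1,1}$, $\eta_{\lambda^{k+1},n^{k+1}_{\rm c}+1,1}$, $p\eta_{\lambda^{k+1},1,n^{k+1}_{\rm c}+1}$. Resolution $\mathcal P$: $\mathcal P_i=P_{\omega(i)}$ ($i\ge0$), $0$ ($i<0$), $d_i=e_{\omega(i-1),\omega(i)}$. $\operatorname{Hom}^z(C,C')=\prod_i\operatorname{Hom}(C_{i+z},C'_i)$, composition componentwise; $\lfloor g\rfloor^y_x$ ($g:C_x\to C'_y$) has $g$ as its $y$-th component, zero elsewhere. $A=\bigoplus_z\operatorname{Hom}^z_{\mathbb{F}_p\mathfrak{S}_p}(\mathcal P,\mathcal P)$ (graded algebra under composition). $\iota:=\sum_{i\ge0}\lfloor e_{\omega(i)}\rfloor^i_{i+l}$; $\chi:=\sum_{i\ge0}(\lfloor e_1\rfloor^{il}_{il+l-1}+\sum_{k=1}^{p-2}\lfloor e_{k+1,k}\rfloor^{il+k}_{il+l-1+k}+\lfloor e_{p-1}\rfloor^{il+p-1}_{il+l-1+p-1}+\sum_{k=1}^{p-2}\lfloor e_{p-k-1,p-k}\rfloor^{il+p-1+k}_{il+l-1+p-1+k})$; $\gamma_k:=\sum_{i\ge0}(\lfloor e_k\rfloor^{k-1+li}_{k(l-1)+li}+\lfloor e_{p-k}\rfloor^{k-1+(p-1)+li}_{k(l-1)+(p-1)+li})$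 for $k\in[2,p-1]$. *)

From HB Require Import structures.
From mathcomp Require Import all_boot all_order all_algebra.
Set Implicit Arguments. Unset Strict Implicit. Unset Printing Implicit Defensive.
Import Order.TTheory GRing.Theory Num.Theory.
Local Open Scope ring_scope.

Definition zloc (p : nat) (x : rat) : bool := ~~ (p %| `|denq x|)%N.
Definition congp (p : nat) (x y : rat) : bool := zloc p ((x - y) / p%:R).

Definition is_part (n : nat) (la : seq nat) : bool :=
  [&& sumn la == n, sorted geq la & all (fun x => 0 < x)%N la].
Definition hook_len (la : seq nat) (r c : nat) : nat :=
  ((nth 0 la r - c) + (count (fun x => c < x)%N la - r) - 1)%N.
Definition nSpecht (la : seq nat) : nat :=
  ((sumn la)`! %/ \prod_(r < size la) \prod_(c < nth 0 la r) hook_len la r c)%N.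

Definition hookp (p k : nat) : seq nat := ((p - k + 1)%N :: nseq (k - 1) 1%N).
Definition nb (p k : nat) : nat := 'C(p - 2, k - 1).
Definition nc (p k : nat) : nat := if (k < 2)%N then 0%N else 'C(p - 2, k - 2).

(* ---------- Gamma: elements are families of matrices, 1-indexed, zero outside ---------- *)
Definition G := seq nat -> nat -> nat -> rat.
Definition inGamma (p : nat) (x : G) : Prop :=
  forall la i j, zloc p (x la i j) /\
    (x la i j != 0 -> [&& is_part p la, (0 < i <= nSpecht la)%N & (0 < j <= nSpecht la)%N]).
Definition eqG (x y : G) : Prop := forall la i j, x la i j = y la i j.
Definition addG (x y : G) : G := fun la i j => x la i j + y la i j.
Definition oppG (x : G) : G := fun la i j => - x la i j.
Definition zeroG : G := fun _ _ _ => 0.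
Definition scaleG (c : rat) (x : G) : G := fun la i j => c * x la i j.
Definition mulG (x y : G) : G :=
  fun la i j => \sum_(1 <= m < (nSpecht la).+1) x la i m * y la m j.
Definition eta (la : seq nat) (a b : nat) : G :=
  fun mu i j => if [&& mu == la, i == a & j == b] then 1 else 0.

Definition inLambda (p : nat) (x : G) : Prop :=
  inGamma p x /\
  forall k, (1 <= k <= p - 1)%N ->
    (forall i j, (1 <= i <= nb p k)%N -> (1 <= j <= nb p k)%N ->
       congp p (x (hookp p k) (nc p k + i)%N (nc p k + j)%N) (x (hookp p k.+1) i j)) /\
    (forall i j, (1 <= i <= nc p k)%N -> (nc p k < j <= nc p k + nb p k)%N ->
       congp p (x (hookp p k) i j) 0).

Definition et (p k : nat) : G :=
  addG (eta (hookp p k) (nc p k).+1 (nc p k).+1) (eta (hookp p k.+1) 1 1).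

(* x represents an element of P_k = e~_k Lambda / p e~_k Lambda *)
Definition inP (p k : nat) (x : G) : Prop :=
  exists rho, inLambda p rho /\ eqG x (mulG (et p k) rho).
(* x lies in p e~_k Lambda, i.e. represents 0 in P_k *)
Definition inpP (p k : nat) (x : G) : Prop :=
  exists rho, inLambda p rho /\ eqG x (scaleG p%:R (mulG (et p k) rho)).

(* ---------- maps between the P_k (acting on representatives) ---------- *)
Definition Mp := G -> G.
Definition addM (f g : Mp) : Mp := fun x => addG (f x) (g x).
Definition zeroM : Mp := fun _ => zeroG.
Definition e_id : Mp := id.
(* e_{k+1,k} : P_k -> P_{k+1} *)
Definition e_up (p k : nat) : Mp := mulG (eta (hookp p k.+1) (nc p k.+1).+1 1).
(* e_{k,k+1} : P_{k+1} -> P_k *)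
Definition e_down (p k : nat) : Mp :=
  mulG (scaleG p%:R (eta (hookp p k.+1) 1 (nc p k.+1).+1)).
Definition e_11 (p : nat) : Mp := mulG (scaleG p%:R (eta (hookp p 1) 1 1)).
Definition e_pp (p : nat) : Mp := mulG (scaleG p%:R (eta (hookp p p) 1 1)).

Definition ll (p : nat) : nat := (2 * (p - 1))%N.
Definition omega (p i : nat) : nat :=
  let r := (i %% ll p)%N in if (r <= p - 2)%N then r.+1 else (ll p - r)%N.

(* ---------- Hom^z(P,P): component i (i >= 0) is a map P_{omega(i+z)} -> P_{omega(i)};
   components with i < 0 have target 0 and are omitted ---------- *)
Definition Hm := nat -> Mp.
Definition addH (f g : Hm) : Hm := fun i => addM (f i) (g i).
Definition zeroH : Hm := fun _ => zeroM.
Definition flr (y : nat) (g : Mp) : Hm := fun i => if i == y then g else zeroM.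
(* sum_{i >= 0} F i, where the y-th component of F i vanishes for i > y *)
Definition ser (F : nat -> Hm) : Hm := fun y => \big[addM/zeroM]_(i < y.+1) F i y.
(* composition of f in Hom^a with g in Hom^b, landing in Hom^(a+b) *)
Definition compH (a : nat) (f g : Hm) : Hm := fun i => f i \o g (i + a)%N.
Definition idH : Hm := fun _ => e_id.
Definition powH (a : nat) (f : Hm) (n : nat) : Hm := iter n (compH a f) idH.
(* equality in Hom^z(P,P): components agree as maps on the quotients *)
Definition eqH (p z : nat) (f g : Hm) : Prop :=
  forall i x, inP p (omega p (i + z)) x -> inpP p (omega p i) (addG (f i x) (oppG (g i x))).

Definition iotaH (p : nat) : Hm := ser (fun i => flr i e_id).
Definition chiH (p : nat) : Hm :=
  ser (fun i =>
    addH (flr (i * ll p)%N e_id)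
   (addH (\big[addH/zeroH]_(1 <= k < p - 1) flr (i * ll p + k)%N (e_up p k))
   (addH (flr (i * ll p + (p - 1))%N e_id)
         (\big[addH/zeroH]_(1 <= k < p - 1)
             flr (i * ll p + (p - 1) + k)%N (e_down p (p - k - 1)))))).
Definition gammaH (p k : nat) : Hm :=
  ser (fun i => addH (flr (k - 1 + ll p * i)%N e_id)
                     (flr (k - 1 + (p - 1) + ll p * i)%N e_id)).
Definition dchi (p : nat) : nat := (ll p - 1)%N.
Definition dgamma (p k : nat) : nat := (k * (ll p - 1) - (k - 1))%N.

(* Every map occurring in iota, gamma_k and, at the components that
   matter, chi is an identity e_j; the identity therefore already holds on
   representatives, entry by entry, and the difference is 0, which lies in
   p e~_k Lambda.  Writing P := p - 1 (half the period l = 2P):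
   - iota^(p-1) is the identity in every component;
   - the y-th component of gamma_k is the identity if y = k-1 (mod P), else 0;
   - the y-th component of chi is the identity if y = 0 (mod P), and every
     component of chi kills zero entries;
   - gamma_k has degree d_k with d_k + 2k - 1 = k l, so precomposing with it
     moves the residue class k-1 to P-k (mod P).
   Hence the three kinds of summands are the identity exactly on the residue
   classes 0, P-1 and k-1 (2 <= k <= P-1) respectively, which partition Z/P.
   The file first proves the residue bookkeeping, then evaluates the
   components of iota, gamma_k and chi, then the three kinds of composites,
   and finally assembles the theorem. *)
From HB Require Import structures.
From mathcomp Require Import all_boot all_order all_algebra zify.
Set Implicit Arguments. Unset Strict Implicit. Unset Printing Implicit Defensive.
Import GRing.Theory.

Lemma modn_double_cases (z P : nat) : 0 < P ->
  z %% (2 * P) = z %% P \/ z %% (2 * P) = z %% P + P.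
Proof.
move=> P_gt0; have r_lt : z %% (2 * P) < 2 * P by rewrite ltn_pmod // muln_gt0.
rewrite -(modn_dvdm z (dvdn_mull 2 (dvdnn P))).
move: r_lt; set r := z %% (2 * P) => r_lt.
case: (ltnP r P) => [r_small | r_big]; first by left; rewrite modn_small.
right; have -> : r = P + (r - P) by lia.
by rewrite modnDl modn_small; lia.
Qed.

Lemma dgamma_complement (p k : nat) : 2 <= p -> 1 <= k ->
  dgamma p k + (2 * k - 1) = k * ll p.
Proof. rewrite /dgamma /ll => *; nia. Qed.

Lemma dgamma_shift (p k y : nat) : 2 <= p -> 1 <= k <= p - 1 ->
  ((y + dgamma p k) %% (p - 1) == p - 1 - k) = (y %% (p - 1) == k - 1).
Proof.
move=> p_ge2 k_range.
rewrite -[p - 1 - k](@modn_small _ (p - 1)); last lia.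
rewrite -[k - 1](@modn_small _ (p - 1)); last lia.
rewrite -(eqn_modDr (2 * k - 1)) -addnA dgamma_complement; [|lia|lia].
have -> : p - 1 - k + (2 * k - 1) = p - 1 + (k - 1) by lia.
by rewrite modnDl /ll mulnA addnC modnMDl.
Qed.

Lemma dchi_dgamma1 (p : nat) : dchi p = dgamma p 1.
Proof. by rewrite /dchi /dgamma mul1n subnn subn0. Qed.

Section Components.
Local Open Scope ring_scope.

Definition null (x : G) : Prop := forall la a b, x la a b = 0.

Lemma bigM_entry (I : Type) (r : seq I) (F : I -> Mp) x la a b :
  (\big[addM/zeroM]_(i <- r) F i) x la a b = \sum_(i <- r) F i x la a b.
Proof. exact: (big_morph (fun f : Mp => f x la a b) (id1 := 0) (op1 := +%R)). Qed.

Lemma bigH_entry (I : Type) (r : seq I) (F : I -> Hm) y x la a b :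
  (\big[addH/zeroH]_(i <- r) F i) y x la a b = \sum_(i <- r) F i y x la a b.
Proof. exact: (big_morph (fun f : Hm => f y x la a b) (id1 := 0) (op1 := +%R)). Qed.

Lemma addH_entry (f g : Hm) y x la a b :
  addH f g y x la a b = f y x la a b + g y x la a b.
Proof. by []. Qed.

Lemma ser_entry (F : nat -> Hm) y x la a b :
  ser F y x la a b = \sum_(i < y.+1) F i y x la a b.
Proof. exact: bigM_entry. Qed.

Lemma flr_entry n g y x la a b :
  flr n g y x la a b = if y == n then g x la a b else 0.
Proof. by rewrite /flr; case: eqP. Qed.

Lemma flr_off_residue (l c i : nat) g y x la a b : (c < l)%N -> (y %% l != c)%N ->
  flr (i * l + c) g y x la a b = 0.
Proof.
move=> c_lt y_res; rewrite flr_entry; case: eqP => // y_def.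
by rewrite y_def modnMDl modn_small ?eqxx in y_res.
Qed.

Lemma sum_periodic_indicator (V : nmodType) (l c y : nat) (v : V) : (c < l)%N ->
  \sum_(i < y.+1) (if y == (i * l + c)%N then v else 0)
    = if (y %% l == c)%N then v else 0.
Proof.
move=> c_lt; have l_gt0 : (0 < l)%N by lia.
have pos_eq (i : nat) : (y == i * l + c)%N = (i == y %/ l)%N && (y %% l == c)%N.
  apply/eqP/andP => [-> | [/eqP -> /eqP <-]]; last exact: divn_eq.
  by rewrite divnMDl // modnMDl divn_small // modn_small // addn0.
under eq_bigr => i _ do rewrite pos_eq if_and.
rewrite -big_mkcond /= (big_ord1_eq _ (fun=> _)) ltnS leq_div.
by case: ifP.
Qed.

(* The two residues c and d = c + P modulo 2P together form the residue c modulo P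
   (d is a separate argument so that it may be written in any form). *)
Lemma residue_halves (V : nmodType) (y P c d : nat) (v : V) : (c < P)%N -> d = (c + P)%N ->
  (if (y %% (2 * P) == c)%N then v else 0) + (if (y %% (2 * P) == d)%N then v else 0)
    = if (y %% P == c)%N then v else 0.
Proof.
move=> c_lt ->; have res_lt : (y %% P < P)%N by rewrite ltn_pmod //; lia.
have [-> | ->] := modn_double_cases y (leq_ltn_trans (leq0n c) c_lt);
  repeat case: ifP => /eqP ?; first [by rewrite ?addr0 ?add0r | exfalso; lia].
Qed.

Lemma gamma_entry (p k y : nat) x la a b : (1 <= k <= p - 1)%N ->
  gammaH p k y x la a b = if (y %% (p - 1) == k - 1)%N then x la a b else 0.
Proof.
move=> k_range; rewrite /gammaH ser_entry.
under eq_bigr => i _ do rewrite addH_entry !flr_entry ![(_ + ll p * i)%N]addnC (mulnC (ll p)).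
rewrite big_split /= !sum_periodic_indicator /ll /e_id; first apply: residue_halves.
all: lia.
Qed.

Lemma iota_entry (p i : nat) x la a b : iotaH p i x la a b = x la a b.
Proof.
rewrite /iotaH ser_entry; under eq_bigr => j _ do rewrite flr_entry eq_sym.
by rewrite -big_mkcond (big_ord1_eq _ (fun=> _)) ltnSn.
Qed.

Lemma iota_pow_entry (p n i : nat) x la a b :
  powH (ll p) (iotaH p) n i x la a b = x la a b.
Proof.
elim: n i x la a b => [|n IH] i x la a b //.
by rewrite /powH iterS /compH /= iota_entry -/(powH _ _ _) IH.
Qed.

Lemma mulG_null (g x : G) : null x -> null (mulG g x).
Proof. by move=> x0 la a b; rewrite /mulG big1 // => m _; rewrite x0 mulr0. Qed.

(* Every component of chi is built from identities and left multiplications. *)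
Lemma chi_null (p y : nat) x : null x -> null (chiH p y x).
Proof.
move=> x0 la a b; have flr_null n g : null (g x) -> flr n g y x la a b = 0.
  by move=> gx0; rewrite flr_entry gx0; case: ifP.
rewrite /chiH ser_entry big1 // => i _.
rewrite !addH_entry !bigH_entry !flr_null // !big1 ?addr0 // => k _;
  by rewrite flr_null //; apply: mulG_null.
Qed.

(* On the residue class 0 modulo P, the component of chi is the identity:
   the maps e_(k+1,k) and e_(k,k+1) sit in the other residue classes modulo l. *)
Lemma chi_entry_on_period (p y : nat) x la a b : (3 <= p)%N -> (y %% (p - 1) = 0)%N ->
  chiH p y x la a b = x la a b.
Proof.
move=> p_ge3 y_res.
have y_res2 : (y %% ll p = 0 \/ y %% ll p = p - 1)%N.
  by have := @modn_double_cases y (p - 1)%N; rewrite y_res add0n; apply; lia.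
have up_zero i : \sum_(1 <= k < p - 1) flr (i * ll p + k) (e_up p k) y x la a b = 0.
  rewrite big_nat big1 // => k /andP [k_ge1 k_lt].
  by apply: flr_off_residue; move: y_res2; rewrite /ll; lia.
have down_zero i : \sum_(1 <= k < p - 1)
    flr (i * ll p + (p - 1) + k) (e_down p (p - k - 1)) y x la a b = 0.
  rewrite big_nat big1 // => k /andP [k_ge1 k_lt].
  by rewrite -addnA; apply: flr_off_residue; move: y_res2; rewrite /ll; lia.
rewrite /chiH ser_entry (eq_bigr (fun i : 'I_y.+1 =>
    (if y == (i * ll p + 0)%N then x la a b else 0)
  + (if y == (i * ll p + (p - 1))%N then x la a b else 0))) => [|i _]; last first.
  by rewrite !addH_entry !bigH_entry up_zero down_zero !flr_entry addn0 add0r addr0.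
rewrite big_split /= !sum_periodic_indicator /ll.
- transitivity (if (y %% (p - 1) == 0)%N then x la a b else 0); last by rewrite y_res.
  by apply: residue_halves; lia.
all: lia.
Qed.

Lemma chi_gamma_entry (p i : nat) x la a b : (3 <= p)%N ->
  compH (dchi p) (chiH p) (gammaH p (p - 1)) i x la a b
    = if (i %% (p - 1) == 0)%N then x la a b else 0.
Proof.
move=> p_ge3; rewrite /compH /=.
have shift : ((i + dchi p) %% (p - 1) == p - 1 - 1)%N = (i %% (p - 1) == 0)%N.
  by rewrite dchi_dgamma1 (@dgamma_shift p 1 i) ?subnn //; lia.
case: (boolP (i %% (p - 1) == 0)%N) => i_res.
  by rewrite chi_entry_on_period ?gamma_entry ?shift ?i_res //; [lia | apply/eqP].
have gx0 : null (gammaH p (p - 1) (i + dchi p)%N x).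
  by move=> la' a' b'; rewrite gamma_entry ?shift ?ifN //; lia.
exact: chi_null gx0 la a b.
Qed.

Lemma gamma_chi_entry (p i : nat) x la a b : (3 <= p)%N ->
  compH (dgamma p (p - 1)) (gammaH p (p - 1)) (chiH p) i x la a b
    = if (i %% (p - 1) == p - 1 - 1)%N then x la a b else 0.
Proof.
move=> p_ge3; rewrite /compH /= gamma_entry; last lia.
case: ifP => // i_res; apply: chi_entry_on_period => //; apply/eqP.
by move: (@dgamma_shift p (p - 1) i); rewrite subnn i_res => ->; lia.
Qed.

Lemma gamma_gamma_entry (p k i : nat) x la a b : (2 <= k < p - 1)%N ->
  compH (dgamma p k) (gammaH p k) (gammaH p (p - k)) i x la a b
    = if (i %% (p - 1) == k - 1)%N then x la a b else 0.
Proof.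
move=> k_range; rewrite /compH /= gamma_entry; last lia.
case: ifP => // i_res; rewrite gamma_entry; last lia.
by rewrite subnAC dgamma_shift ?i_res //; lia.
Qed.

Lemma residue_partition (V : nmodType) (P r : nat) (v : V) : (2 <= P)%N -> (r < P)%N ->
  (if r == 0%N then v else 0)
    + ((if r == (P - 1)%N then v else 0)
    + \sum_(2 <= k < P) (if r == (k - 1)%N then v else 0)) = v.
Proof.
move=> P_ge2 r_lt.
rewrite (@eq_big_nat _ _ _ _ _ _ (fun k => if k == r.+1 then v else 0)) => [|k k_range];
  last by congr (if _ then _ else _); apply/eqP/eqP; lia.
rewrite -big_mkcond big_nat1_eq.
by repeat case: ifP => ?; first [by rewrite ?addr0 ?add0r | exfalso; lia].
Qed.

Lemma zloc_zero (p : nat) : prime p -> zloc p 0.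
Proof. by move=> /prime_gt1 p_gt1; rewrite /zloc (_ : denq 0 = 1) // dvdn1 gtn_eqF. Qed.

Lemma inLambda_zero (p : nat) : prime p -> inLambda p zeroG.
Proof.
move=> /zloc_zero z0; split=> [la i j | k _]; first by split=> //; rewrite eqxx.
by split=> i j _ _; rewrite /congp subrr mul0r.
Qed.

(* Maps agreeing entrywise on representatives are equal in A: their
   difference is 0 = p e~_k 0, which represents 0 in P_k. *)
Lemma eqH_of_entries (p z : nat) (f g : Hm) : prime p ->
  (forall i x la a b, f i x la a b = g i x la a b) -> eqH p z f g.
Proof.
move=> p_prime fg i x _; exists zeroG; split; first exact: inLambda_zero.
by move=> la a b; rewrite /addG /oppG /scaleG fg subrr mulG_null ?mulr0.
Qed.

End Components.

Theorem mainTheorem9 (p : nat) :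
  prime p -> (3 <= p)%N ->
  eqH p ((p - 1) * ll p)%N
    (addH (compH (dchi p) (chiH p) (gammaH p (p - 1)))
    (addH (compH (dgamma p (p - 1)) (gammaH p (p - 1)) (chiH p))
          (\big[addH/zeroH]_(2 <= k < p - 1)
              compH (dgamma p k) (gammaH p k) (gammaH p (p - k)))))
    (powH (ll p) (iotaH p) (p - 1)).
Proof.
move=> p_prime p_ge3; apply: eqH_of_entries => // i x la a b.
rewrite iota_pow_entry !addH_entry bigH_entry chi_gamma_entry // gamma_chi_entry //.
rewrite (eq_big_nat _ _ (fun k k_range => gamma_gamma_entry i x la a b k_range)).
by apply: residue_partition; [lia | rewrite ltn_pmod //; lia].
Qed.
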